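(* Let $n\ge 3$, $1<k<n/2$ and $p_{se}:=\frac{nk}{n-2k}<p<p_{so}:=\frac{(n+2)k}{n-2k}$. Then problem (1.6) has no regular solution.
   Context: Here $C_{n-1}^{k-1}$ denotes the binomial coefficient. Problem (1.6) is: given $\rho>0$, find $u$ with $$-\tfrac{1}{k}C_{n-1}^{k-1}\big(r^{n-k}|u'|^{k-1}u'\big)'=r^{n-1}u^{p},\quad u(r)>0 \text{ for all } r>0,\qquad u'(0)=0,\ u(0)=\rho .$$ A solution $u$ of (1.6) is called regular if the function $x\mapsto u(|x|)$ belongs to $C^2(\mathbb{R}^n)$. *)

From Stdlib Require Import Reals Lra Lia.
Open Scope R_scope.

(* Points of R^n are represented as functions nat -> R; only the
   coordinates 0..n-1 are used (norms, distances, partial derivatives). *)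

Fixpoint sumR (n : nat) (f : nat -> R) : R :=
  match n with
  | O => 0
  | S m => sumR m f + f m
  end.

Definition dist_n (n : nat) (x y : nat -> R) : R :=
  sqrt (sumR n (fun i => (x i - y i) ^ 2)).

Definition norm_n (n : nat) (x : nat -> R) : R := dist_n n x (fun _ => 0).

Definition cont_n (n : nat) (f : (nat -> R) -> R) : Prop :=
  forall x eps, 0 < eps -> exists delta, 0 < delta /\
    forall y, dist_n n x y < delta -> Rabs (f y - f x) < eps.

Definition upd (x : nat -> R) (i : nat) (t : R) : nat -> R :=
  fun j => if Nat.eq_dec j i then x i + t else x j.

Definition partial_lim (f : (nat -> R) -> R) (i : nat) (x : nat -> R) (l : R) : Prop :=
  derivable_pt_lim (fun t => f (upd x i t)) 0 l.

Definition C2_n (n : nat) (f : (nat -> R) -> R) : Prop :=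
  cont_n n f /\
  exists (g : nat -> (nat -> R) -> R) (h : nat -> nat -> (nat -> R) -> R),
    (forall i, (i < n)%nat -> forall x, partial_lim f i x (g i x)) /\
    (forall i j, (i < n)%nat -> (j < n)%nat -> forall x, partial_lim (g i) j x (h i j x)) /\
    (forall i, (i < n)%nat -> cont_n n (g i)) /\
    (forall i j, (i < n)%nat -> (j < n)%nat -> cont_n n (h i j)).

Definition right_deriv0 (u : R -> R) (l : R) : Prop :=
  forall eps, 0 < eps -> exists delta, 0 < delta /\
    forall h, 0 < h < delta -> Rabs ((u h - u 0) / h - l) < eps.

(* u solves problem (1.6) (u is only relevant on [0, +oo)):
   -(1/k) C(n-1,k-1) (r^(n-k) |u'|^(k-1) u')' = r^(n-1) u^p  for r > 0,
   u(r) > 0 for r > 0, u'(0) = 0, u(0) = rho. *)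
Definition solves_1_6 (n k : nat) (p rho : R) (u : R -> R) : Prop :=
  (exists du dw : R -> R,
     (forall r, 0 < r -> derivable_pt_lim u r (du r)) /\
     (forall r, 0 < r ->
        derivable_pt_lim (fun s => s ^ (n - k) * (Rabs (du s)) ^ (k - 1) * du s) r (dw r)) /\
     (forall r, 0 < r ->
        - (1 / INR k) * C (n - 1) (k - 1) * dw r = r ^ (n - 1) * Rpower (u r) p)) /\
  (forall r, 0 < r -> 0 < u r) /\
  right_deriv0 u 0 /\
  u 0 = rho.

Definition regular_solution (n k : nat) (p rho : R) (u : R -> R) : Prop :=
  solves_1_6 n k p rho u /\ C2_n n (fun x => u (norm_n n x)).

(* Put v(r) = -r^(n-k) |u'|^(k-1) u'.  Then (1.6) is the first-order system
   c v' = r^(n-1) u^p,  u' = -v^(1/k) r^((k-n)/k)  with c = C(n-1,k-1)/k, and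
   regularity at the origin gives v(r) = O(r) and u bounded near 0.  Since u
   decreases, v(r) >= r^n u(r)^p / (n c); inserting this into u' gives
   (u^(1-p/k))' >= 2 b r, hence u(r) <= K1 r^(-2k/(p-k)), and then
   v(r) <= C r^beta with beta = n - 2kp/(p-k) > 0 because p > p_se.  The
   Pohozaev functional F satisfies F' = gamma r^(n-1) u^(p+1) with gamma > 0
   because p < p_so and F(0+) = 0, so F(1) > 0; but the decay bounds give
   F(r) = O(r^(-theta)) with theta > 0, a contradiction. *)

From Stdlib Require Import Reals Lra Lia.
Open Scope R_scope.

Lemma Rpower_pos x e : 0 < Rpower x e.
Proof. exact (exp_pos _). Qed.

Lemma Rpower_Rinv x y : 0 < x -> Rpower (/ x) y = Rpower x (- y).
Proof. intros hx. unfold Rpower. rewrite ln_Rinv by exact hx. f_equal; ring. Qed.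

Lemma derivable_pt_lim_eq_val f x l l' :
  derivable_pt_lim f x l -> l = l' -> derivable_pt_lim f x l'.
Proof. now intros H <-. Qed.

Lemma derivable_pt_lim_Rpower_comp f x a e :
  derivable_pt_lim f x a -> 0 < f x ->
  derivable_pt_lim (fun s => Rpower (f s) e) x (e * Rpower (f x) (e - 1) * a).
Proof.
  intros Hf Hpos. eapply derivable_pt_lim_eq_val.
  - apply (derivable_pt_lim_comp f (fun s => Rpower s e)); [exact Hf|].
    now apply derivable_pt_lim_power.
  - ring.
Qed.

Lemma nondecreasing_of_derive_nonneg f f' a b : a <= b ->
  (forall r, a <= r <= b -> derivable_pt_lim f r (f' r)) ->
  (forall r, a <= r <= b -> 0 <= f' r) -> f a <= f b.
Proof.
  intros hab hd hpos. destruct (Rle_lt_or_eq_dec a b hab) as [h|<-]; [|lra].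
  destruct (MVT_cor2 f f' a b h hd) as [c [E hc]].
  assert (0 <= f' c) by (apply hpos; lra). nra.
Qed.

Lemma increasing_of_derive_pos f f' a b : a < b ->
  (forall r, a <= r <= b -> derivable_pt_lim f r (f' r)) ->
  (forall r, a <= r <= b -> 0 < f' r) -> f a < f b.
Proof.
  intros hab hd hpos.
  destruct (MVT_cor2 f f' a b hab hd) as [c [E hc]].
  assert (0 < f' c) by (apply hpos; lra). nra.
Qed.

Lemma nonpos_of_power_bound X C d b : 0 < d -> 0 < b ->
  (forall e, 0 < e < d -> X <= C * Rpower e b) -> X <= 0.
Proof.
  intros hd hb H. destruct (Rle_or_lt X 0) as [h|hX]; [exact h|exfalso].
  destruct (Rle_or_lt C 0) as [hC|hC].
  - specialize (H (d / 2) ltac:(lra)). pose proof (Rpower_pos (d / 2) b). nra.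
  - set (e0 := Rpower (X / (2 * C)) (/ b)).
    assert (he0 : Rpower e0 b = X / (2 * C)).
    { unfold e0. rewrite Rpower_mult, Rinv_l, Rpower_1 by (try apply Rdiv_lt_0_compat; lra).
      reflexivity. }
    set (e := Rmin (d / 2) e0).
    assert (0 < e) by (apply Rmin_pos; [lra|apply Rpower_pos]).
    assert (e <= e0) by apply Rmin_r.
    assert (e <= d / 2) by apply Rmin_l.
    specialize (H e ltac:(lra)).
    assert (Rpower e b <= Rpower e0 b) by (apply Rle_Rpower_l; lra).
    assert (C * (X / (2 * C)) = X / 2) by (field; lra).
    rewrite he0 in *. nra.
Qed.

Lemma nonneg_of_nondecreasing_power_bound G G' r C d b : 0 < r -> 0 < d -> 0 < b ->
  (forall x, 0 < x <= r -> derivable_pt_lim G x (G' x)) ->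
  (forall x, 0 < x <= r -> 0 <= G' x) ->
  (forall e, 0 < e < d -> - (C * Rpower e b) <= G e) -> 0 <= G r.
Proof.
  intros hr hd hb hG hG' hsmall.
  enough (- G r <= 0) by lra.
  apply (nonpos_of_power_bound _ C (Rmin r d) b); [now apply Rmin_pos|exact hb|].
  intros e he.
  assert (e < r) by (pose proof (Rmin_l r d); lra).
  assert (e < d) by (pose proof (Rmin_r r d); lra).
  assert (G e <= G r).
  { apply (nondecreasing_of_derive_nonneg G G'); [lra| |];
      intros x hx; [apply hG|apply hG']; lra. }
  specialize (hsmall e ltac:(lra)). lra.
Qed.

Lemma pos_of_increasing_from_0 V dV d M : 0 < d ->
  (forall r, 0 < r -> derivable_pt_lim V r (dV r)) -> (forall r, 0 < r -> 0 < dV r) ->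
  (forall e, 0 < e < d -> Rabs (V e) <= M * e) -> forall r, 0 < r -> 0 < V r.
Proof.
  intros hd hV hdV hsmall r hr.
  assert (0 <= V (r / 2)).
  { apply (nonneg_of_nondecreasing_power_bound V dV (r / 2) M d 1); try lra.
    - intros x hx. apply hV. lra.
    - intros x hx. left. apply hdV. lra.
    - intros e he. rewrite Rpower_1 by lra. specialize (hsmall e he).
      pose proof (Rle_abs (- V e)). rewrite Rabs_Ropp in *. lra. }
  enough (V (r / 2) < V r) by lra.
  apply (increasing_of_derive_pos V dV); [lra| |]; intros x hx; [apply hV|apply hdV]; lra.
Qed.

Lemma exists_power_decay_lt th E Z : 0 < th -> 0 < Z ->
  exists r, 1 <= r /\ E * Rpower r (- th) < Z.
Proof.
  intros hth hZ. set (T := Rmax 1 (2 * Rabs E / Z + 1)).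
  assert (1 <= T) by apply Rmax_l.
  assert (2 * Rabs E / Z + 1 <= T) by apply Rmax_r.
  exists (Rpower T (/ th)). split.
  - rewrite <- (Rpower_O T) by lra.
    apply Rle_Rpower; [lra|]. left; now apply Rinv_0_lt_compat.
  - rewrite Rpower_mult. replace (/ th * - th) with (Ropp 1) by (field; lra).
    rewrite Rpower_Ropp, Rpower_1 by lra.
    assert (E <= Rabs E) by apply RRle_abs.
    assert (2 * Rabs E / Z * Z = 2 * Rabs E) by (field; lra).
    assert (E * / T <= Rabs E * / T).
    { apply Rmult_le_compat_r; [|lra]. left; apply Rinv_0_lt_compat; lra. }
    assert (Rabs E * / T < Z).
    { apply (Rmult_lt_reg_r T); [lra|]. rewrite Rmult_assoc, Rinv_l by lra.
      pose proof (Rabs_pos E). nra. }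
    lra.
Qed.

Section RadialSystem.

Variables (N K p c : R) (u du V dV : R -> R) (d M : R).

Hypothesis K_pos : 0 < K.
Hypothesis two_K_lt_N : 2 * K < N.
Hypothesis p_gt_serrin : N * K < p * (N - 2 * K).
Hypothesis p_lt_sobolev : p * (N - 2 * K) < (N + 2) * K.
Hypothesis c_pos : 0 < c.
Hypothesis u_deriv : forall r, 0 < r -> derivable_pt_lim u r (du r).
Hypothesis V_deriv : forall r, 0 < r -> derivable_pt_lim V r (dV r).
Hypothesis V_deriv_eq : forall r, 0 < r -> c * dV r = Rpower r (N - 1) * Rpower (u r) p.
Hypothesis u_pos : forall r, 0 < r -> 0 < u r.
Hypothesis V_pos : forall r, 0 < r -> 0 < V r.
Hypothesis du_eq : forall r, 0 < r -> du r = - (Rpower (V r) (/ K) * Rpower r ((K - N) / K)).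
Hypothesis d_pos : 0 < d.
Hypothesis V_small : forall e, 0 < e < d -> V e <= M * e.
Hypothesis u_small : forall e, 0 < e < d -> u e <= M.

Lemma K_lt_p : K < p.
Proof. assert (N * K > K * (N - 2 * K)) by nra. nra. Qed.

Lemma p_div_K_gt_1 : 1 < p / K.
Proof. pose proof K_lt_p. apply (Rmult_lt_reg_r K); [lra|]. field_simplify; lra. Qed.

Lemma u_nonincreasing s r : 0 < s -> s <= r -> u r <= u s.
Proof.
  intros hs hsr. enough (- u s <= - u r) by lra.
  apply (nondecreasing_of_derive_nonneg (fun x => - u x) (fun x => - du x)); [exact hsr| |].
  - intros x hx. apply derivable_pt_lim_opp, u_deriv. lra.
  - intros x hx. rewrite du_eq by lra.
    pose proof (Rpower_pos (V x) (/ K)). pose proof (Rpower_pos x ((K - N) / K)). nra.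
Qed.

(* [c V r] is the integral of [s^(N-1) u(s)^p] over [(0, r)], and [u] is nonincreasing. *)
Lemma V_lower_bound r : 0 < r -> Rpower r N * Rpower (u r) p / (N * c) <= V r.
Proof.
  intros hr. assert (0 < N) by lra. pose proof K_lt_p. set (P := Rpower (u r) p).
  enough (0 <= c * V r - Rpower r N * (P / N)).
  { apply (Rmult_le_reg_l c); [exact c_pos|].
    replace (c * (Rpower r N * P / (N * c))) with (Rpower r N * (P / N)) by (field; lra). lra. }
  apply (nonneg_of_nondecreasing_power_bound (fun s => c * V s - Rpower s N * (P / N))
           (fun s => c * dV s - N * Rpower s (N - 1) * (P / N))
           r (P / N) r N); try lra.
  - intros x hx. eapply derivable_pt_lim_eq_val.
    + apply derivable_pt_lim_minus.
      * apply derivable_pt_lim_scal, V_deriv; lra.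
      * apply (derivable_pt_lim_mult (fun s => Rpower s N) (fun _ => P / N)).
        -- apply derivable_pt_lim_power; lra.
        -- apply derivable_pt_lim_const.
    + ring.
  - intros x hx. rewrite V_deriv_eq by lra.
    assert (P <= Rpower (u x) p).
    { apply Rle_Rpower_l; [lra|]. split; [apply u_pos; lra|]. apply u_nonincreasing; lra. }
    pose proof (Rpower_pos x (N - 1)).
    replace (Rpower x (N - 1) * Rpower (u x) p - N * Rpower x (N - 1) * (P / N))
      with (Rpower x (N - 1) * (Rpower (u x) p - P)) by (field; lra).
    apply Rmult_le_pos; lra.
  - intros e he. assert (0 < c * V e) by (apply Rmult_lt_0_compat; [|apply V_pos]; lra).
    lra.
Qed.

Let b := (p / K - 1) * Rpower (N * c) (- / K) / 2.
Let alpha := 2 * K / (p - K).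
Let K1 := Rpower b (- (K / (p - K))).

Lemma b_pos : 0 < b.
Proof.
  pose proof p_div_K_gt_1. pose proof (Rpower_pos (N * c) (- / K)).
  unfold b. nra.
Qed.

Lemma u_power_deriv_lower x : 0 < x ->
  2 * b * x <= (1 - p / K) * Rpower (u x) (1 - p / K - 1) * du x.
Proof.
  intros hx. assert (0 < N) by lra. pose proof K_lt_p. pose proof b_pos.
  assert (hux := u_pos x hx).
  assert (hA : Rpower (Rpower x N * Rpower (u x) p / (N * c)) (/ K) <= Rpower (V x) (/ K)).
  { apply Rle_Rpower_l; [left; now apply Rinv_0_lt_compat|]. split; [|now apply V_lower_bound].
    pose proof (Rpower_pos x N). pose proof (Rpower_pos (u x) p).
    apply Rdiv_lt_0_compat; nra. }
  replace (Rpower (Rpower x N * Rpower (u x) p / (N * c)) (/ K))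
    with (Rpower x (N * / K) * Rpower (u x) (p * / K) * Rpower (N * c) (- / K)) in hA.
  2:{ assert (0 < N * c) by nra. unfold Rdiv.
      rewrite <- !Rpower_mult_distr, !Rpower_mult, Rpower_Rinv;
        try apply Rmult_lt_0_compat; try apply Rinv_0_lt_compat; try apply Rpower_pos; auto.
      rewrite Rpower_mult_distr by lra. reflexivity. }
  rewrite du_eq by exact hx.
  pose proof (Rpower_pos (u x) (1 - p / K - 1)).
  pose proof (Rpower_pos x ((K - N) / K)).
  assert (hcoef : 0 <= (p / K - 1) * Rpower (u x) (1 - p / K - 1) * Rpower x ((K - N) / K)).
  { pose proof p_div_K_gt_1. apply Rmult_le_pos; [apply Rmult_le_pos|]; lra. }
  assert (hprod := Rmult_le_compat_l _ _ _ hcoef hA).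
  (* the powers of [u] and of [x] combine to [u^0] and [x^1] *)
  assert (E : (p / K - 1) * Rpower (u x) (1 - p / K - 1) * Rpower x ((K - N) / K) *
              (Rpower x (N * / K) * Rpower (u x) (p * / K) * Rpower (N * c) (- / K)) = 2 * b * x).
  { unfold b.
    replace ((p / K - 1) * Rpower (u x) (1 - p / K - 1) * Rpower x ((K - N) / K) *
             (Rpower x (N * / K) * Rpower (u x) (p * / K) * Rpower (N * c) (- / K)))
      with ((p / K - 1) * Rpower (N * c) (- / K) *
            (Rpower (u x) (1 - p / K - 1) * Rpower (u x) (p * / K)) *
            (Rpower x ((K - N) / K) * Rpower x (N * / K))) by ring.
    rewrite <- !Rpower_plus.
    replace (1 - p / K - 1 + p * / K) with 0 by (field; lra).
    replace ((K - N) / K + N * / K) with 1 by (field; lra).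
    rewrite Rpower_1, Rpower_O by lra. field; lra. }
  lra.
Qed.

Lemma u_power_lower_bound r : 0 < r -> b * Rpower r 2 <= Rpower (u r) (1 - p / K).
Proof.
  intros hr.
  enough (0 <= Rpower (u r) (1 - p / K) - b * Rpower r 2) by lra.
  apply (nonneg_of_nondecreasing_power_bound
           (fun s => Rpower (u s) (1 - p / K) - b * Rpower s 2)
           (fun s => (1 - p / K) * Rpower (u s) (1 - p / K - 1) * du s - b * (2 * Rpower s (2 - 1)))
           r b r 2); try lra.
  - intros x hx. apply derivable_pt_lim_minus.
    + apply derivable_pt_lim_Rpower_comp; [apply u_deriv|apply u_pos]; lra.
    + apply derivable_pt_lim_scal, derivable_pt_lim_power. lra.
  - intros x hx. replace (2 - 1) with 1 by ring. rewrite Rpower_1 by lra.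
    pose proof (u_power_deriv_lower x ltac:(lra)). lra.
  - intros e he. pose proof (Rpower_pos (u e) (1 - p / K)). lra.
Qed.

Lemma u_decay r : 0 < r -> u r <= K1 * Rpower r (- alpha).
Proof.
  intros hr. pose proof K_lt_p. pose proof b_pos.
  assert (hur := u_pos r hr).
  assert (hbr : 0 < b * Rpower r 2) by (pose proof (Rpower_pos r 2); nra).
  assert (hK : 0 <= K / (p - K)) by (left; apply Rdiv_lt_0_compat; lra).
  assert (hpow := Rle_Rpower_l _ _ _ hK (conj hbr (u_power_lower_bound r hr))).
  rewrite Rpower_mult in hpow.
  replace ((1 - p / K) * (K / (p - K))) with (Ropp 1) in hpow by (field; lra).
  rewrite Rpower_Ropp, Rpower_1 in hpow by exact hur.
  assert (hu := Rinv_le_contravar _ _ (Rpower_pos _ _) hpow).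
  rewrite Rinv_inv, <- Rpower_Ropp, <- Rpower_mult_distr, Rpower_mult in hu
    by (try apply Rpower_pos; lra).
  unfold K1, alpha. replace (- (2 * K / (p - K))) with (2 * - (K / (p - K))) by (field; lra).
  exact hu.
Qed.

Let beta := N - alpha * p.

Lemma alpha_mul : alpha * (p - K) = 2 * K.
Proof. pose proof K_lt_p. unfold alpha. field. lra. Qed.

Lemma beta_pos : 0 < beta.
Proof.
  pose proof K_lt_p. pose proof alpha_mul.
  apply (Rmult_lt_reg_r (p - K)); [lra|]. unfold beta. nra.
Qed.

Lemma V_upper_bound r : 0 < r -> c * V r <= Rpower K1 p / beta * Rpower r beta.
Proof.
  intros hr. pose proof K_lt_p. pose proof beta_pos.
  enough (0 <= Rpower K1 p / beta * Rpower r beta - c * V r) by lra.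
  apply (nonneg_of_nondecreasing_power_bound
           (fun s => Rpower K1 p / beta * Rpower s beta - c * V s)
           (fun s => Rpower K1 p / beta * (beta * Rpower s (beta - 1)) - c * dV s)
           r (c * M) d 1); try lra.
  - intros x hx. apply derivable_pt_lim_minus; apply derivable_pt_lim_scal.
    + apply derivable_pt_lim_power. lra.
    + apply V_deriv. lra.
  - intros x hx. rewrite V_deriv_eq by lra.
    assert (hu : Rpower (u x) p <= Rpower K1 p * Rpower x (- alpha * p)).
    { rewrite <- Rpower_mult, Rpower_mult_distr by apply Rpower_pos.
      apply Rle_Rpower_l; [lra|]. split; [apply u_pos|apply u_decay]; lra. }
    assert (E : Rpower x (N - 1) * Rpower x (- alpha * p) = Rpower x (beta - 1)).
    { rewrite <- Rpower_plus. f_equal. unfold beta. ring. }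
    pose proof (Rpower_pos x (N - 1)).
    assert (Rpower x (N - 1) * Rpower (u x) p
            <= Rpower x (N - 1) * (Rpower K1 p * Rpower x (- alpha * p)))
      by (apply Rmult_le_compat_l; lra).
    replace (Rpower K1 p / beta * (beta * Rpower x (beta - 1)))
      with (Rpower K1 p * Rpower x (beta - 1)) by (field; lra).
    nra.
  - intros e he. rewrite Rpower_1 by lra.
    pose proof (Rpower_pos K1 p). pose proof (Rpower_pos e beta).
    assert (0 < Rpower K1 p / beta * Rpower e beta) by (apply Rmult_lt_0_compat; [apply Rdiv_lt_0_compat|]; lra).
    assert (c * V e <= c * (M * e)) by (apply Rmult_le_compat_l; [lra|apply V_small; lra]).
    nra.
Qed.

Let gamma := N / (p + 1) - (N - 2 * K) / (K + 1).

Lemma gamma_pos : 0 < gamma.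
Proof.
  pose proof K_lt_p. unfold gamma.
  apply (Rmult_lt_reg_r ((p + 1) * (K + 1))); [nra|]. rewrite Rmult_0_l.
  replace ((N / (p + 1) - (N - 2 * K) / (K + 1)) * ((p + 1) * (K + 1)))
    with (N * (K + 1) - (N - 2 * K) * (p + 1)) by (field; lra).
  nra.
Qed.

Definition pohozaev (s : R) : R :=
  K * c / (K + 1) * (Rpower (V s) ((K + 1) / K) * Rpower s ((2 * K - N) / K))
  + / (p + 1) * (Rpower (u s) (p + 1) * Rpower s N)
  - c * (N - 2 * K) / (K + 1) * (u s * V s).

Lemma pohozaev_deriv s : 0 < s ->
  derivable_pt_lim pohozaev s (gamma * (Rpower s (N - 1) * Rpower (u s) (p + 1))).
Proof.
  intros hs. pose proof K_lt_p.
  assert (hVs := V_pos s hs). assert (hus := u_pos s hs).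
  unfold pohozaev. eapply derivable_pt_lim_eq_val.
  { apply derivable_pt_lim_minus; [apply derivable_pt_lim_plus|];
      apply derivable_pt_lim_scal; apply derivable_pt_lim_mult.
    - apply derivable_pt_lim_Rpower_comp; [apply V_deriv|]; lra.
    - apply derivable_pt_lim_power; lra.
    - apply derivable_pt_lim_Rpower_comp; [apply u_deriv|]; lra.
    - apply derivable_pt_lim_power; lra.
    - apply u_deriv; lra.
    - apply V_deriv; lra. }
  assert (Rpower (V s) ((K + 1) / K - 1) = Rpower (V s) (/ K)) as -> by (f_equal; field; lra).
  assert (Rpower (V s) ((K + 1) / K) = V s * Rpower (V s) (/ K)) as ->.
  { rewrite <- (Rpower_1 (V s)) at 2 by lra. rewrite <- Rpower_plus. f_equal; field; lra. }
  assert (Rpower s ((2 * K - N) / K) = s * Rpower s ((K - N) / K)) as ->.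
  { rewrite <- (Rpower_1 s) at 2 by lra. rewrite <- Rpower_plus. f_equal; field; lra. }
  assert (Rpower s ((2 * K - N) / K - 1) = Rpower s ((K - N) / K)) as -> by (f_equal; field; lra).
  assert (Rpower (u s) (p + 1 - 1) = Rpower (u s) p) as -> by (f_equal; ring).
  assert (Rpower (u s) (p + 1) = u s * Rpower (u s) p) as ->.
  { rewrite <- (Rpower_1 (u s)) at 2 by lra. rewrite <- Rpower_plus. f_equal; ring. }
  assert (Rpower s N = s * Rpower s (N - 1)) as ->.
  { rewrite <- (Rpower_1 s) at 2 by lra. rewrite <- Rpower_plus. f_equal; ring. }
  assert (dV s = Rpower s (N - 1) * Rpower (u s) p / c) as ->.
  { rewrite <- V_deriv_eq by lra. field; lra. }
  rewrite du_eq by lra.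
  unfold gamma. field. repeat split; lra.
Qed.

Lemma pohozaev_deriv_pos s : 0 < s -> 0 < gamma * (Rpower s (N - 1) * Rpower (u s) (p + 1)).
Proof.
  intros hs. pose proof gamma_pos.
  pose proof (Rpower_pos s (N - 1)). pose proof (Rpower_pos (u s) (p + 1)).
  apply Rmult_lt_0_compat; [lra|]. apply Rmult_lt_0_compat; lra.
Qed.

Lemma pohozaev_nondecreasing a r : 0 < a -> a <= r -> pohozaev a <= pohozaev r.
Proof.
  intros ha har.
  apply (nondecreasing_of_derive_nonneg pohozaev
           (fun s => gamma * (Rpower s (N - 1) * Rpower (u s) (p + 1)))); [exact har| |];
    intros x hx; [apply pohozaev_deriv|left; apply pohozaev_deriv_pos]; lra.
Qed.

Lemma pohozaev_nonneg r : 0 < r -> 0 <= pohozaev r.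
Proof.
  intros hr. pose proof K_lt_p.
  apply (nonneg_of_nondecreasing_power_bound pohozaev
           (fun s => gamma * (Rpower s (N - 1) * Rpower (u s) (p + 1)))
           r (c * (N - 2 * K) / (K + 1) * M * M) d 1); try lra.
  - intros x hx. apply pohozaev_deriv. lra.
  - intros x hx. left. apply pohozaev_deriv_pos. lra.
  - intros e he. rewrite Rpower_1 by lra. unfold pohozaev.
    assert (hue := u_pos e ltac:(lra)). assert (hVe := V_pos e ltac:(lra)).
    assert (hV := V_small e he). assert (hu := u_small e he).
    pose proof (Rpower_pos (V e) ((K + 1) / K)). pose proof (Rpower_pos e ((2 * K - N) / K)).
    pose proof (Rpower_pos (u e) (p + 1)). pose proof (Rpower_pos e N).
    assert (0 <= K * c / (K + 1)) by (left; apply Rdiv_lt_0_compat; nra).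
    assert (0 <= / (p + 1)) by (left; apply Rinv_0_lt_compat; lra).
    assert (0 <= c * (N - 2 * K) / (K + 1)) by (left; apply Rdiv_lt_0_compat; nra).
    assert (u e * V e <= M * (M * e)) by (apply Rmult_le_compat; lra).
    assert (c * (N - 2 * K) / (K + 1) * (u e * V e)
            <= c * (N - 2 * K) / (K + 1) * (M * (M * e))) by (apply Rmult_le_compat_l; lra).
    assert (0 <= K * c / (K + 1) * (Rpower (V e) ((K + 1) / K) * Rpower e ((2 * K - N) / K)))
      by (apply Rmult_le_pos; nra).
    assert (0 <= / (p + 1) * (Rpower (u e) (p + 1) * Rpower e N)) by (apply Rmult_le_pos; nra).
    nra.
Qed.

Lemma pohozaev_1_pos : 0 < pohozaev 1.
Proof.
  enough (pohozaev (1 / 2) < pohozaev 1) by (pose proof (pohozaev_nonneg (1 / 2) ltac:(lra)); lra).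
  apply (increasing_of_derive_pos pohozaev
           (fun s => gamma * (Rpower s (N - 1) * Rpower (u s) (p + 1)))); [lra| |];
    intros x hx; [apply pohozaev_deriv|apply pohozaev_deriv_pos]; lra.
Qed.

Let theta := alpha * (K + 1) - N + 2 * K.

Lemma theta_pos : 0 < theta.
Proof.
  pose proof K_lt_p. pose proof alpha_mul.
  apply (Rmult_lt_reg_r (p - K)); [lra|]. unfold theta. nra.
Qed.

Lemma V_energy_decay r : 0 < r ->
  Rpower (V r) ((K + 1) / K) * Rpower r ((2 * K - N) / K)
  <= Rpower (Rpower K1 p / (beta * c)) ((K + 1) / K) * Rpower r (- theta).
Proof.
  intros hr. pose proof K_lt_p. pose proof beta_pos. pose proof alpha_mul.
  assert (hV : V r <= Rpower K1 p / (beta * c) * Rpower r beta).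
  { apply (Rmult_le_reg_l c); [exact c_pos|].
    replace (c * (Rpower K1 p / (beta * c) * Rpower r beta))
      with (Rpower K1 p / beta * Rpower r beta) by (field; lra).
    now apply V_upper_bound. }
  assert (hpow : Rpower (V r) ((K + 1) / K)
                 <= Rpower (Rpower K1 p / (beta * c)) ((K + 1) / K) * Rpower r (beta * ((K + 1) / K))).
  { rewrite <- Rpower_mult, Rpower_mult_distr
      by (first [apply Rpower_pos | apply Rdiv_lt_0_compat; [apply Rpower_pos|nra]]).
    apply Rle_Rpower_l; [left; apply Rdiv_lt_0_compat; lra|]. split; [apply V_pos|]; lra. }
  assert (E : Rpower r (beta * ((K + 1) / K)) * Rpower r ((2 * K - N) / K) = Rpower r (- theta)).
  { rewrite <- Rpower_plus. f_equal. unfold beta, theta.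
    apply (Rmult_eq_reg_r (p - K)); [|lra].
    replace ((N - alpha * p) * ((K + 1) / K) + (2 * K - N) / K) with
      ((N * (K + 1) + 2 * K - N) / K - alpha * p * ((K + 1) / K)) by (field; lra).
    replace (alpha * p) with (alpha * (p - K) + alpha * K) by ring.
    rewrite alpha_mul. field; lra. }
  pose proof (Rpower_pos r ((2 * K - N) / K)).
  apply (Rmult_le_compat_r (Rpower r ((2 * K - N) / K))) in hpow; [|lra].
  rewrite Rmult_assoc, E in hpow. exact hpow.
Qed.

Lemma u_energy_decay r : 0 < r ->
  Rpower (u r) (p + 1) * Rpower r N <= Rpower K1 (p + 1) * Rpower r (- theta).
Proof.
  intros hr. pose proof K_lt_p. pose proof alpha_mul.
  assert (hpow : Rpower (u r) (p + 1) <= Rpower K1 (p + 1) * Rpower r (- alpha * (p + 1))).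
  { rewrite <- Rpower_mult, Rpower_mult_distr by apply Rpower_pos.
    apply Rle_Rpower_l; [lra|]. split; [apply u_pos|apply u_decay]; lra. }
  assert (E : Rpower r (- alpha * (p + 1)) * Rpower r N = Rpower r (- theta)).
  { rewrite <- Rpower_plus. f_equal. unfold theta.
    replace (- alpha * (p + 1) + N) with (- (alpha * (p - K)) - alpha * K - alpha + N) by ring.
    rewrite alpha_mul. ring. }
  pose proof (Rpower_pos r N).
  apply (Rmult_le_compat_r (Rpower r N)) in hpow; [|lra].
  rewrite Rmult_assoc, E in hpow. exact hpow.
Qed.

Lemma pohozaev_decay : exists E, forall r, 0 < r -> pohozaev r <= E * Rpower r (- theta).
Proof.
  pose proof K_lt_p.
  exists (K * c / (K + 1) * Rpower (Rpower K1 p / (beta * c)) ((K + 1) / K)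
          + / (p + 1) * Rpower K1 (p + 1)).
  intros r hr. unfold pohozaev.
  assert (hur := u_pos r hr). assert (hVr := V_pos r hr).
  assert (hA : 0 <= K * c / (K + 1)) by (left; apply Rdiv_lt_0_compat; nra).
  assert (hB : 0 <= / (p + 1)) by (left; apply Rinv_0_lt_compat; lra).
  assert (0 <= c * (N - 2 * K) / (K + 1) * (u r * V r))
    by (apply Rmult_le_pos; [left; apply Rdiv_lt_0_compat|]; nra).
  pose proof (Rmult_le_compat_l _ _ _ hA (V_energy_decay r hr)).
  pose proof (Rmult_le_compat_l _ _ _ hB (u_energy_decay r hr)).
  nra.
Qed.

Lemma radial_system_absurd : False.
Proof.
  destruct pohozaev_decay as [E HE].
  destruct (exists_power_decay_lt theta E (pohozaev 1) theta_pos pohozaev_1_pos) as [r [hr1 hr]].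
  pose proof (pohozaev_nondecreasing 1 r ltac:(lra) hr1).
  pose proof (HE r ltac:(lra)). lra.
Qed.
End RadialSystem.

Lemma sumR_supported_0 m f : (1 <= m)%nat -> (forall i, i <> 0%nat -> f i = 0) ->
  sumR m f = f 0%nat.
Proof.
  intros hm hf. induction m as [|[|m] IH]; [lia|simpl; ring|].
  change (sumR (S (S m)) f) with (sumR (S m) f + f (S m)).
  rewrite IH, (hf (S m)) by lia. ring.
Qed.

Lemma dist_n_supported_0 n x y : (1 <= n)%nat -> (forall i, i <> 0%nat -> x i = y i) ->
  dist_n n x y = Rabs (x 0%nat - y 0%nat).
Proof.
  intros hn hxy. unfold dist_n.
  rewrite (sumR_supported_0 n (fun i => (x i - y i) ^ 2)) by (try intros i hi; rewrite ?hxy; auto; ring).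
  rewrite <- sqrt_Rsqr_abs. unfold Rsqr. f_equal. ring.
Qed.

Definition axis_point (t : R) : nat -> R := upd (fun _ => 0) 0 t.

Lemma radial_partial_on_axis n u du t : (1 <= n)%nat -> 0 < t -> derivable_pt_lim u t du ->
  partial_lim (fun x => u (norm_n n x)) 0 (axis_point t) du.
Proof.
  intros hn ht hu eps heps. destruct (hu eps heps) as [del Hdel].
  assert (hm : 0 < Rmin del t) by (apply Rmin_pos; [apply cond_pos|exact ht]).
  exists (mkposreal _ hm). intros h hh0 hlt. simpl in hlt.
  assert (Rabs h < del) by (pose proof (Rmin_l del t); lra).
  assert (Rabs h < t) by (pose proof (Rmin_r del t); lra).
  assert (hnorm : forall s, norm_n n (upd (axis_point t) 0 s) = Rabs (t + s)).
  { intros s. unfold norm_n.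
    rewrite dist_n_supported_0
      by (try intros i hi; unfold axis_point, upd; repeat destruct Nat.eq_dec; lia || reflexivity).
    unfold axis_point, upd. repeat destruct Nat.eq_dec; try lia. f_equal. ring. }
  rewrite !hnorm, Rplus_0_r, (Rabs_right t) by lra.
  pose proof (Rle_abs (- h)). rewrite Rabs_Ropp in *.
  rewrite Rplus_0_l, (Rabs_right (t + h)) by lra. now apply Hdel.
Qed.

Lemma radial_derivative_bounded n u du : (1 <= n)%nat ->
  C2_n n (fun x => u (norm_n n x)) -> (forall r, 0 < r -> derivable_pt_lim u r (du r)) ->
  exists d M, 0 < d /\ 0 <= M /\ forall t, 0 < t < d -> Rabs (du t) <= M.
Proof.
  intros hn [_ [g [_ [hg [_ [hgc _]]]]]] hu.
  assert (hgdu : forall t, 0 < t -> g 0%nat (axis_point t) = du t).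
  { intros t ht. apply (uniqueness_limite (fun s => u (norm_n n (upd (axis_point t) 0 s))) 0).
    - apply hg. lia.
    - apply radial_partial_on_axis; auto. }
  destruct (hgc 0%nat ltac:(lia) (axis_point 0) 1 ltac:(lra)) as [d [hd hcont]].
  exists d, (Rabs (g 0%nat (axis_point 0)) + 1).
  split; [exact hd|]. split; [pose proof (Rabs_pos (g 0%nat (axis_point 0))); lra|].
  intros t ht. rewrite <- hgdu by lra.
  assert (Rabs (g 0%nat (axis_point t) - g 0%nat (axis_point 0)) < 1).
  { apply hcont. rewrite dist_n_supported_0 by
      (try intros i hi; unfold axis_point, upd; repeat destruct Nat.eq_dec; lia || reflexivity).
    unfold axis_point, upd. repeat destruct Nat.eq_dec; try lia.
    replace (0 + 0 - (0 + t)) with (- t) by ring. rewrite Rabs_Ropp, Rabs_right; lra. }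
  pose proof (Rabs_triang_inv (g 0%nat (axis_point t)) (g 0%nat (axis_point 0))). lra.
Qed.

Lemma right_deriv0_upper u : right_deriv0 u 0 ->
  exists d, 0 < d /\ forall h, 0 < h < d -> u h < u 0 + h.
Proof.
  intros hu. destruct (hu 1 ltac:(lra)) as [d [hd hdiff]].
  exists d. split; [exact hd|]. intros h hh.
  specialize (hdiff h hh). rewrite Rminus_0_r in hdiff.
  pose proof (Rle_abs ((u h - u 0) / h)).
  assert (hlt : (u h - u 0) / h * h < 1 * h) by (apply Rmult_lt_compat_r; lra).
  replace ((u h - u 0) / h * h) with (u h - u 0) in hlt by (field; lra). lra.
Qed.

Definition flux (n k : nat) (du : R -> R) (r : R) : R := r ^ (n - k) * Rabs (du r) ^ (k - 1) * du r.

Lemma flux_bound (n k : nat) du r A : (k < n)%nat -> 0 < r <= 1 -> Rabs (du r) <= A ->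
  Rabs (flux n k du r) <= A ^ (k - 1) * A * r.
Proof.
  intros hkn hr ha. unfold flux.
  rewrite !Rabs_mult, <- !RPow_abs, Rabs_Rabsolu, (Rabs_right r) by lra.
  assert (hr_pow : r ^ (n - k) <= r).
  { replace (n - k)%nat with (S (n - k - 1)) by lia. simpl.
    assert (r ^ (n - k - 1) <= 1) by (rewrite <- (pow1 (n - k - 1)); apply pow_incr; lra).
    pose proof (pow_le r (n - k - 1) ltac:(lra)). nra. }
  assert (Rabs (du r) ^ (k - 1) * Rabs (du r) <= A ^ (k - 1) * A).
  { apply Rmult_le_compat; [apply pow_le, Rabs_pos|apply Rabs_pos| |exact ha].
    apply pow_incr. split; [apply Rabs_pos|exact ha]. }
  pose proof (pow_le r (n - k) ltac:(lra)).
  assert (0 <= Rabs (du r) ^ (k - 1) * Rabs (du r))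
    by (apply Rmult_le_pos; [apply pow_le|]; apply Rabs_pos).
  nra.
Qed.

Lemma flux_inverse (n k : nat) du r : (1 <= k)%nat -> (k <= n)%nat -> 0 < r ->
  0 < - flux n k du r ->
  du r = - (Rpower (- flux n k du r) (/ INR k) * Rpower r ((INR k - INR n) / INR k)).
Proof.
  intros hk hkn hr hflux. unfold flux in *.
  assert (hK : 0 < INR k) by (apply lt_0_INR; lia).
  assert (ha : du r < 0).
  { destruct (Rlt_or_le (du r) 0) as [h|h]; [exact h|exfalso].
    pose proof (pow_le r (n - k) ltac:(lra)).
    pose proof (pow_le (Rabs (du r)) (k - 1) (Rabs_pos (du r))).
    assert (0 <= r ^ (n - k) * Rabs (du r) ^ (k - 1)) by (apply Rmult_le_pos; auto). nra. }
  set (v := - du r). assert (hv : 0 < v) by (unfold v; lra).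
  assert (E : - (r ^ (n - k) * Rabs (du r) ^ (k - 1) * du r) = r ^ (n - k) * v ^ k).
  { rewrite Rabs_left by exact ha. fold v. replace (du r) with (- v) by (unfold v; ring).
    replace (v ^ k) with (v ^ (k - 1) * v) by (rewrite Rmult_comm, tech_pow_Rmult; f_equal; lia).
    ring. }
  rewrite E, <- !Rpower_pow, <- Rpower_mult_distr, !Rpower_mult, minus_INR
    by (try apply Rpower_pos; lia || lra).
  replace (INR k * / INR k) with 1 by (field; lra). rewrite Rpower_1 by exact hv.
  replace (Rpower r ((INR n - INR k) * / INR k) * v * Rpower r ((INR k - INR n) / INR k))
    with (v * (Rpower r ((INR n - INR k) * / INR k) * Rpower r ((INR k - INR n) / INR k))) by ring.
  rewrite <- Rpower_plus.
  replace ((INR n - INR k) * / INR k + (INR k - INR n) / INR k) with 0 by (field; lra).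
  rewrite Rpower_O by exact hr. unfold v. ring.
Qed.

Lemma regular_solution_bounded_near_0 (n k : nat) u du : (k < n)%nat ->
  C2_n n (fun x => u (norm_n n x)) -> (forall r, 0 < r -> derivable_pt_lim u r (du r)) ->
  right_deriv0 u 0 ->
  exists d M, 0 < d /\ forall e, 0 < e < d -> Rabs (flux n k du e) <= M * e /\ u e <= M.
Proof.
  intros hkn hC2 hdu hr0.
  destruct (radial_derivative_bounded n u du ltac:(lia) hC2 hdu) as [d1 [M1 [hd1 [hM1 hdu_small]]]].
  destruct (right_deriv0_upper u hr0) as [d2 [hd2 hu_small]].
  exists (Rmin (Rmin d1 d2) 1), (M1 ^ (k - 1) * M1 + Rabs (u 0) + 1).
  split; [repeat apply Rmin_pos; lra|]. intros e he.
  pose proof (Rmin_l (Rmin d1 d2) 1). pose proof (Rmin_r (Rmin d1 d2) 1).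
  pose proof (Rmin_l d1 d2). pose proof (Rmin_r d1 d2).
  pose proof (pow_le M1 (k - 1) hM1). pose proof (Rle_abs (u 0)). pose proof (Rabs_pos (u 0)).
  split.
  - assert (Rabs (flux n k du e) <= M1 ^ (k - 1) * M1 * e)
      by (apply flux_bound; [exact hkn|lra|apply hdu_small; lra]).
    nra.
  - pose proof (hu_small e ltac:(lra)). nra.
Qed.

Lemma C_pos n m : 0 < C n m.
Proof.
  unfold C. apply Rdiv_lt_0_compat; [apply INR_fact_lt_0|].
  apply Rmult_lt_0_compat; apply INR_fact_lt_0.
Qed.

Lemma exponent_range (n k : nat) p : (1 < k)%nat -> (2 * k < n)%nat ->
  INR n * INR k / (INR n - 2 * INR k) < p -> p < (INR n + 2) * INR k / (INR n - 2 * INR k) ->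
  0 < INR k /\ 2 * INR k < INR n /\
  INR n * INR k < p * (INR n - 2 * INR k) /\ p * (INR n - 2 * INR k) < (INR n + 2) * INR k.
Proof.
  intros hk hkn hp1 hp2.
  assert (hK : 0 < INR k) by (apply lt_0_INR; lia).
  assert (h2K : 2 * INR k < INR n).
  { replace 2 with (INR 2) by reflexivity. rewrite <- mult_INR. apply lt_INR. exact hkn. }
  assert (hD : 0 < INR n - 2 * INR k) by lra.
  apply (Rmult_lt_compat_r _ _ _ hD) in hp1, hp2.
  unfold Rdiv in hp1, hp2. rewrite Rmult_assoc, Rinv_l, Rmult_1_r in hp1, hp2 by lra.
  repeat split; lra.
Qed.

Theorem theorem1p1 (n k : nat) (p rho : R) :
  (3 <= n)%nat -> (1 < k)%nat -> (2 * k < n)%nat ->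
  INR n * INR k / (INR n - 2 * INR k) < p ->
  p < (INR n + 2) * INR k / (INR n - 2 * INR k) ->
  0 < rho ->
  ~ (exists u : R -> R, regular_solution n k p rho u).
Proof.
  intros _ hk hkn hp1 hp2 _ [u [[[du [dw [hdu [hdw heq]]]] [hpos [hr0 _]]] hC2]].
  destruct (exponent_range n k p hk hkn hp1 hp2) as (hK & h2K & hserrin & hsobolev).
  set (c := C (n - 1) (k - 1) / INR k).
  assert (hc : 0 < c) by (apply Rdiv_lt_0_compat; [apply C_pos|exact hK]).
  assert (hV : forall r, 0 < r -> derivable_pt_lim (fun s => - flux n k du s) r (- dw r))
    by (intros r hr; apply derivable_pt_lim_opp, hdw, hr).
  assert (hVeq : forall r, 0 < r -> c * - dw r = Rpower r (INR n - 1) * Rpower (u r) p).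
  { intros r hr.
    replace (INR n - 1) with (INR (n - 1)) by (rewrite minus_INR by lia; simpl; ring).
    rewrite Rpower_pow, <- heq by exact hr. unfold c. field. lra. }
  assert (hdV : forall r, 0 < r -> 0 < - dw r).
  { intros r hr. assert (0 < c * - dw r) by (rewrite hVeq by exact hr;
      apply Rmult_lt_0_compat; apply Rpower_pos). nra. }
  destruct (regular_solution_bounded_near_0 n k u du ltac:(lia) hC2 hdu hr0) as [d [M [hd hsmall]]].
  assert (hVpos : forall r, 0 < r -> 0 < - flux n k du r).
  { apply (pos_of_increasing_from_0 _ _ d M hd hV hdV).
    intros e he. rewrite Rabs_Ropp. apply hsmall, he. }
  apply (radial_system_absurd (INR n) (INR k) p c u du (fun s => - flux n k du s)
           (fun r => - dw r) d M); auto.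
  - intros r hr. apply flux_inverse; [lia|lia|exact hr|now apply hVpos].
  - intros e he. destruct (hsmall e he) as [hV_small _].
    pose proof (Rle_abs (- flux n k du e)). rewrite Rabs_Ropp in *. lra.
  - intros e he. apply hsmall, he.
Qed.
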